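(* Let $A(z)=\sum_{k=0}^{\infty}a_kz^k$ with $a_0\neq 0$ and $H(z)=\sum_{k=1}^{\infty}h_kz^k$ with $h_1\neq 0$ be analytic in a disk $|z|<R$ with $R>1$, with real coefficients. Let the Sheffer polynomials $p_k$ be defined by $A(t)e^{xH(t)}=\sum_{k=0}^{\infty}p_k(x)t^k$ for $|t|<R$, and assume $p_k(x)\ge 0$ for all $x\ge 0$ and all $k$, $A(1)\neq 0$ and $H'(1)=1$. Let $(b_n)$ be a positive increasing sequence with $b_n\to\infty$ and $b_n/n\to 0$, and define $$T_n^*(f;x)=\frac{e^{-\frac{n}{b_n}xH(1)}}{A(1)}\sum_{k=0}^{\infty}p_k\Big(\frac{n}{b_n}x\Big)f\Big(\frac{k}{n}b_n\Big).$$ Let $\rho(x)=1+x^2$. Then there is a constant $M>0$, independent of $n$, such that $\|T_n^*(\rho;\cdot)\|_{\rho}\le 1+M$ for all $n$.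
   Context: For a function $g$ on $[0,\infty)$, $\|g\|_\rho=\sup_{x\ge 0}\frac{|g(x)|}{\rho(x)}$. *)

From Stdlib Require Import Reals.
From Coquelicot Require Import Coquelicot.
Open Scope R_scope.

Definition rho (x : R) : R := 1 + x ^ 2.

(* The operator T_n^*(f; x), with A(t) = PSeries a t, H(t) = PSeries h t,
   p the Sheffer polynomials and b the sequence (b_n). *)
Definition T_star (a h : nat -> R) (p : nat -> R -> R) (b : nat -> R)
  (n : nat) (f : R -> R) (x : R) : R :=
  exp (- (INR n / b n) * x * PSeries h 1) / PSeries a 1 *
  Series (fun k => p k (INR n / b n * x) * f (INR k / INR n * b n)).

From Stdlib Require Import Reals Lra.
From Coquelicot Require Import Coquelicot.
Open Scope R_scope.

(* With c = b_n / n and y = n x / b_n we have rho (k b_n / n) = 1 + c^2 k^2, so T_n^*(rho; x)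
   only involves the generating function G_y(t) = A(t) e^{y H(t)} and the moment
   sum_k k^2 p_k(y) = G_y'(1) + G_y''(1).  Computing these derivatives gives
   T_n^*(rho; x) = 1 + c^2 al + c x be + x^2 ga with al, be, ga independent of n, and c stays
   bounded since b_n / n -> 0. *)

Lemma is_lim_seq_0_bounded (u : nat -> R) :
  is_lim_seq u 0 -> exists M, forall n, Rabs (u n) <= M.
Proof.
  intros Hu. destruct (filterlim_bounded u) as [M HM].
  - exists 0. exact Hu.
  - exists M. exact HM.
Qed.

Lemma CV_radius_ge_of_ex_pseries (P : nat -> R) (r : R) :
  ex_pseries P r -> Rbar_le r (CV_radius P).
Proof.
  intros Hex. apply CV_radius_bounded.
  destruct (is_lim_seq_0_bounded _ (ex_series_lim_0 _ Hex)) as [M HM].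
  exists M. intros n. rewrite Rmult_comm, <- pow_n_pow. exact (HM n).
Qed.

Lemma CV_radius_lt (P : nat -> R) (r t : R) :
  Rbar_le r (CV_radius P) -> Rabs t < r -> Rbar_lt (Rabs t) (CV_radius P).
Proof. destruct (CV_radius P); simpl; lra. Qed.

Lemma locally_Rabs_lt (r t : R) : Rabs t < r -> locally t (fun u => Rabs u < r).
Proof.
  intros Ht. apply Rabs_def2 in Ht.
  apply (locally_interval _ t (Finite (- r)) (Finite r)); simpl; try lra.
  intros u H1 H2. apply Rabs_def1; lra.
Qed.

Lemma is_series_of_is_pseries_1 (Q : nat -> R) (l : R) :
  is_pseries Q 1 l -> is_series Q l.
Proof.
  apply is_series_ext. intros k. rewrite pow_n_pow, pow1. apply Rmult_1_l.
Qed.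

Lemma PSeries_derive_loc (P : nat -> R) (G : R -> R) (t l : R) :
  Rbar_lt (Rabs t) (CV_radius P) -> locally t (fun u => PSeries P u = G u) ->
  is_derive G t l -> PSeries (PS_derive P) t = l.
Proof.
  intros Ht HPG HG.
  assert (HP := is_derive_PSeries P t Ht).
  apply (is_derive_ext_loc _ G) in HP; [|exact HPG].
  rewrite <- (is_derive_unique _ _ _ HP). exact (is_derive_unique _ _ _ HG).
Qed.

(* k^2 P_k are the coefficients of t (t P')', whose value at 1 is P'(1) + P''(1). *)
Lemma is_series_sqr_index (P : nat -> R) :
  Rbar_lt 1 (CV_radius P) ->
  is_series (fun k => INR k ^ 2 * P k)
    (PSeries (PS_derive P) 1 + PSeries (PS_derive (PS_derive P)) 1).
Proof.
  intros HP.
  set (Q := @PS_incr_1 R_AbsRing R_NormedModule (PS_derive P)).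
  assert (HQ : Rbar_lt (Rabs 1) (CV_radius (PS_derive Q))).
  { unfold Q. rewrite CV_radius_derive, CV_radius_incr_1, CV_radius_derive, Rabs_R1.
    exact HP. }
  apply (is_series_ext (PS_incr_1 (PS_derive Q))).
  { intros [|k]; [simpl; unfold zero; simpl; ring|].
    unfold Q; simpl. unfold PS_derive. simpl. ring. }
  apply is_series_of_is_pseries_1.
  replace (_ + _) with (PSeries (PS_derive Q) 1).
  { rewrite <- (scal_one (PSeries (PS_derive Q) 1)).
    apply (is_pseries_incr_1 (PS_derive Q) 1), PSeries_correct, CV_radius_inside, HQ. }
  apply (PSeries_derive_loc Q (fun t => t * PSeries (PS_derive P) t)).
  - rewrite Rabs_R1. unfold Q. rewrite CV_radius_incr_1, CV_radius_derive. exact HP.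
  - apply filter_forall. intros t. unfold Q. apply PSeries_incr_1.
  - auto_derive.
    + apply ex_derive_PSeries. rewrite CV_radius_derive, Rabs_R1. exact HP.
    + rewrite Derive_PSeries; [ring|]. rewrite CV_radius_derive, Rabs_R1. exact HP.
Qed.

Definition sheffer_gf (a h : nat -> R) (y t : R) : R :=
  PSeries a t * exp (y * PSeries h t).

Definition sheffer_gf_d1 (a h : nat -> R) (y t : R) : R :=
  (PSeries (PS_derive a) t + y * PSeries a t * PSeries (PS_derive h) t)
  * exp (y * PSeries h t).

Definition sheffer_gf_d2 (a h : nat -> R) (y t : R) : R :=
  (PSeries (PS_derive (PS_derive a)) t
   + y * (2 * PSeries (PS_derive a) t * PSeries (PS_derive h) t
          + PSeries a t * PSeries (PS_derive (PS_derive h)) t)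
   + y ^ 2 * PSeries a t * PSeries (PS_derive h) t ^ 2)
  * exp (y * PSeries h t).

Section ShefferMoments.

Variables (a h : nat -> R) (R0 : R) (p : nat -> R -> R).
Hypothesis HR0 : 1 < R0.
Hypothesis Ha_rad : Rbar_le R0 (CV_radius a).
Hypothesis Hh_rad : Rbar_le R0 (CV_radius h).
Hypothesis Hgen : forall x t : R, Rabs t < R0 ->
  is_pseries (fun k => p k x) t (sheffer_gf a h x t).

Lemma is_derive_sheffer_gf (y t : R) :
  Rabs t < R0 -> is_derive (sheffer_gf a h y) t (sheffer_gf_d1 a h y t).
Proof.
  intros Ht.
  assert (Ra := CV_radius_lt a R0 t Ha_rad Ht).
  assert (Rh := CV_radius_lt h R0 t Hh_rad Ht).
  unfold sheffer_gf, sheffer_gf_d1. auto_derive.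
  - repeat split; apply ex_derive_PSeries; assumption.
  - rewrite !Derive_PSeries by assumption. ring.
Qed.

Lemma is_derive_sheffer_gf_d1 (y t : R) :
  Rabs t < R0 -> is_derive (sheffer_gf_d1 a h y) t (sheffer_gf_d2 a h y t).
Proof.
  intros Ht.
  assert (Ra := CV_radius_lt a R0 t Ha_rad Ht).
  assert (Rh := CV_radius_lt h R0 t Hh_rad Ht).
  assert (Ra' : Rbar_lt (Rabs t) (CV_radius (PS_derive a))) by
    (rewrite CV_radius_derive; exact Ra).
  assert (Rh' : Rbar_lt (Rabs t) (CV_radius (PS_derive h))) by
    (rewrite CV_radius_derive; exact Rh).
  unfold sheffer_gf_d1, sheffer_gf_d2. auto_derive.
  - repeat split; apply ex_derive_PSeries; assumption.
  - rewrite !Derive_PSeries by assumption. ring.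
Qed.

Lemma is_series_sheffer (y : R) : is_series (fun k => p k y) (sheffer_gf a h y 1).
Proof. apply is_series_of_is_pseries_1, Hgen. rewrite Rabs_R1. exact HR0. Qed.

Lemma is_series_sheffer_sqr_index (y : R) :
  is_series (fun k => INR k ^ 2 * p k y)
    (sheffer_gf_d1 a h y 1 + sheffer_gf_d2 a h y 1).
Proof.
  set (P := fun k => p k y).
  set (r := (1 + R0) / 2).
  assert (H1r : Rabs 1 < r) by (rewrite Rabs_R1; unfold r; lra).
  assert (HPr : Rbar_le r (CV_radius P)).
  { apply CV_radius_ge_of_ex_pseries. eexists. apply Hgen.
    unfold r. rewrite Rabs_pos_eq; lra. }
  assert (HP1 : forall t, Rabs t < r -> PSeries (PS_derive P) t = sheffer_gf_d1 a h y t).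
  { intros t Ht. apply (PSeries_derive_loc P (sheffer_gf a h y)).
    - exact (CV_radius_lt P r t HPr Ht).
    - apply (filter_imp (fun u => Rabs u < r)); [|exact (locally_Rabs_lt r t Ht)].
      intros u Hu. apply is_pseries_unique, Hgen. unfold r in Hu. lra.
    - apply is_derive_sheffer_gf. unfold r in Ht. lra. }
  assert (HP2 : PSeries (PS_derive (PS_derive P)) 1 = sheffer_gf_d2 a h y 1).
  { apply (PSeries_derive_loc _ (sheffer_gf_d1 a h y)).
    - rewrite CV_radius_derive. exact (CV_radius_lt P r 1 HPr H1r).
    - apply (filter_imp (fun u => Rabs u < r)); [exact HP1|exact (locally_Rabs_lt r 1 H1r)].
    - apply is_derive_sheffer_gf_d1. rewrite Rabs_R1. exact HR0. }
  rewrite <- HP2, <- (HP1 1 H1r).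
  apply is_series_sqr_index.
  rewrite <- Rabs_R1. exact (CV_radius_lt P r 1 HPr H1r).
Qed.

Lemma T_star_rho_eq (b : nat -> R) (n : nat) (x : R) :
  (1 <= n)%nat -> 0 < b n -> PSeries a 1 <> 0 ->
  ex_series (fun k => p k (INR n / b n * x) * rho (INR k / INR n * b n)) /\
  T_star a h p b n rho x =
    1 + (b n / INR n) ^ 2 *
          ((PSeries (PS_derive a) 1 + PSeries (PS_derive (PS_derive a)) 1) / PSeries a 1)
      + b n / INR n * x *
          (2 * PSeries (PS_derive a) 1 * PSeries (PS_derive h) 1 / PSeries a 1
           + PSeries (PS_derive h) 1 + PSeries (PS_derive (PS_derive h)) 1)
      + x ^ 2 * PSeries (PS_derive h) 1 ^ 2.
Proof.
  intros Hn Hb HA1. apply le_INR in Hn. simpl in Hn.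
  set (y := INR n / b n * x). set (c := b n / INR n).
  assert (Hterm : forall k,
    p k y + c ^ 2 * (INR k ^ 2 * p k y) = p k y * rho (INR k / INR n * b n)).
  { intros k. unfold rho, c. field. lra. }
  assert (Hser : is_series (fun k => p k y * rho (INR k / INR n * b n))
    (sheffer_gf a h y 1 + c ^ 2 * (sheffer_gf_d1 a h y 1 + sheffer_gf_d2 a h y 1))).
  { apply (is_series_ext _ _ _ Hterm).
    apply (is_series_plus (V := R_NormedModule)); [apply is_series_sheffer|].
    apply (is_series_scal_l (V := R_NormedModule)), is_series_sheffer_sqr_index. }
  split; [eexists; exact Hser|].
  unfold T_star. fold y. rewrite (is_series_unique _ _ Hser).
  replace (- (INR n / b n) * x * PSeries h 1) with (- (y * PSeries h 1)) by (unfold y; ring).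
  rewrite exp_Ropp. unfold sheffer_gf, sheffer_gf_d1, sheffer_gf_d2, c, y.
  field. repeat split; try lra; try exact HA1. apply Rgt_not_eq, exp_pos.
Qed.

End ShefferMoments.

Lemma quadratic_div_rho_le (K al be ga c x : R) :
  0 <= c <= K -> 0 <= x ->
  Rabs (1 + c ^ 2 * al + c * x * be + x ^ 2 * ga) / rho x
  <= 1 + (K ^ 2 * Rabs al + K * Rabs be + Rabs ga).
Proof.
  intros Hc Hx. unfold rho.
  assert (Htri : Rabs (1 + c ^ 2 * al + c * x * be + x ^ 2 * ga)
                 <= 1 + c ^ 2 * Rabs al + c * x * Rabs be + x ^ 2 * Rabs ga).
  { pose proof (Rabs_triang (1 + c ^ 2 * al + c * x * be) (x ^ 2 * ga)).
    pose proof (Rabs_triang (1 + c ^ 2 * al) (c * x * be)).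
    pose proof (Rabs_triang 1 (c ^ 2 * al)).
    assert (Rabs (c ^ 2 * al) = c ^ 2 * Rabs al) by (rewrite Rabs_mult, Rabs_pos_eq; nra).
    assert (Rabs (c * x * be) = c * x * Rabs be) by (rewrite Rabs_mult, Rabs_pos_eq; nra).
    assert (Rabs (x ^ 2 * ga) = x ^ 2 * Rabs ga) by (rewrite Rabs_mult, Rabs_pos_eq; nra).
    rewrite Rabs_R1 in *. lra. }
  apply Rle_div_l; [nra|].
  pose proof (Rabs_pos al). pose proof (Rabs_pos be). pose proof (Rabs_pos ga).
  assert (c ^ 2 * Rabs al <= K ^ 2 * Rabs al) by (apply Rmult_le_compat_r; [lra|apply pow_incr; lra]).
  assert (c * x * Rabs be <= K * (1 + x ^ 2) * Rabs be).
  { apply Rmult_le_compat_r; [lra|].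
    assert (x <= 1 + x ^ 2) by nra.
    apply Rle_trans with (K * x); apply Rmult_le_compat; lra. }
  assert (0 <= K ^ 2 * Rabs al * x ^ 2) by (apply Rmult_le_pos; [apply Rmult_le_pos|]; nra).
  assert (0 <= x ^ 2) by nra.
  apply (Rle_trans _ _ _ Htri). ring_simplify. nra.
Qed.

Theorem lemma3p3
  (a h : nat -> R) (R0 : R) (p : nat -> R -> R) (b : nat -> R)
  (HR0 : 1 < R0)
  (Ha_rad : Rbar_le (Finite R0) (CV_radius a))
  (Hh_rad : Rbar_le (Finite R0) (CV_radius h))
  (Ha0 : a 0%nat <> 0)
  (Hh0 : h 0%nat = 0)
  (Hh1 : h 1%nat <> 0)
  (Hgen : forall x t : R, Rabs t < R0 ->
     is_pseries (fun k => p k x) t (PSeries a t * exp (x * PSeries h t)))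
  (Hpos : forall (k : nat) (x : R), 0 <= x -> 0 <= p k x)
  (HA1 : PSeries a 1 <> 0)
  (HH1 : is_derive (fun t => PSeries h t) 1 1)
  (Hb_pos : forall n : nat, 0 < b n)
  (Hb_incr : forall n : nat, b n < b (S n))
  (Hb_inf : is_lim_seq b p_infty)
  (Hb_n : is_lim_seq (fun n => b n / INR n) 0) :
  exists M : R, 0 < M /\
    forall n : nat, (1 <= n)%nat ->
      forall x : R, 0 <= x ->
        ex_series (fun k => p k (INR n / b n * x) * rho (INR k / INR n * b n)) /\
        Rabs (T_star a h p b n rho x) / rho x <= 1 + M.
Proof.
  destruct (is_lim_seq_0_bounded _ Hb_n) as [K HK].
  assert (HK0 : 0 <= K) by exact (Rle_trans _ _ _ (Rabs_pos _) (HK 0%nat)).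
  set (al := (PSeries (PS_derive a) 1 + PSeries (PS_derive (PS_derive a)) 1) / PSeries a 1).
  set (be := 2 * PSeries (PS_derive a) 1 * PSeries (PS_derive h) 1 / PSeries a 1
             + PSeries (PS_derive h) 1 + PSeries (PS_derive (PS_derive h)) 1).
  set (ga := PSeries (PS_derive h) 1 ^ 2).
  exists (K ^ 2 * Rabs al + K * Rabs be + Rabs ga + 1). split.
  { assert (0 <= K ^ 2 * Rabs al) by (apply Rmult_le_pos; [apply pow2_ge_0|apply Rabs_pos]).
    assert (0 <= K * Rabs be) by (apply Rmult_le_pos; [lra|apply Rabs_pos]).
    pose proof (Rabs_pos ga). lra. }
  intros n Hn x Hx.
  destruct (T_star_rho_eq a h R0 p HR0 Ha_rad Hh_rad Hgen b n x Hn (Hb_pos n) HA1)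
    as [Hex HT].
  split; [exact Hex|]. rewrite HT.
  assert (Hc : 0 <= b n / INR n <= K).
  { apply le_INR in Hn. simpl in Hn.
    assert (Hc0 : 0 < b n / INR n) by (apply Rdiv_lt_0_compat; [apply Hb_pos|lra]).
    pose proof (HK n) as HKn. rewrite Rabs_pos_eq in HKn; lra. }
  eapply Rle_trans; [exact (quadratic_div_rho_le K al be ga _ x Hc Hx)|lra].
Qed.
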